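(* Let $G$ and $H$ be graphs. If for every graph $K$ the conditions $G\mid K$ and $H\mid K$ together imply $G\otimes H\mid K$, then $G$ and $H$ are strongly disjoint.
   Context: A weight function on finite $U$ is $\alpha:U\times U\to\mathbb{R}$, $\alpha\ge0$, symmetric, summing to $1$; degree $p(u)=\sum_{u'}\alpha(u,u')$; a graph is $(U,\alpha)$. The tensor product of $G=(U,\alpha)$, $H=(V,\beta)$ is $G\otimes H=(U\times V,\alpha\otimes\beta)$ with $(\alpha\otimes\beta)((u,v),(u',v'))=\alpha(u,u')\beta(v,v')$. For graphs $G=(U,\alpha)$, $H=(V,\beta)$ with degrees $p,q$, $H\mid G$ means there is a surjective $\phi:U\to V$ with (i) $q(v)=\sum_{u\in\phi^{-1}(v)}p(u)$ for all $v$, and (ii) $q(v)\sum_{u'\in\phi^{-1}(v')}\alpha(u,u')=p(u)\beta(v,v')$ for all $v,v'$, $u\in\phi^{-1}(v)$. A weight joining of $\alpha,\beta$ is a weight function $\gamma$ on $U\times V$ with degree $r(u,v)=\sum_{(u',v')}\gamma((u,v),(u',v'))$ such that $\sum_v r(u,v)=p(u)$, $\sum_u r(u,v)=q(v)$, $p(u)\sum_{\tilde v}\gamma((u,v),(u',\tilde v))=\alpha(u,u')r(u,v)$ and $q(v)\sum_{\tilde u}\gamma((u,v),(\tilde u,v'))=\beta(v,v')r(u,v)$. $G,H$ are strongly disjoint if the only weight joining is $\alpha\otimes\beta$. *)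

From mathcomp Require Import all_boot all_order all_algebra.
From mathcomp Require Import reals.
Set Implicit Arguments. Unset Strict Implicit. Unset Printing Implicit Defensive.
Import Order.TTheory GRing.Theory Num.Theory.
Local Open Scope ring_scope.

Section Defs.
Variable R : realType.

Definition is_weight (U : finType) (a : U -> U -> R) : Prop :=
  [/\ forall u u', 0 <= a u u',
      forall u u', a u u' = a u' u &
      \sum_(u : U) \sum_(u' : U) a u u' = 1].

Definition deg (U : finType) (a : U -> U -> R) (u : U) : R :=
  \sum_(u' : U) a u u'.

Definition tensor (U V : finType) (a : U -> U -> R) (b : V -> V -> R)
  (x y : U * V) : R := a x.1 y.1 * b x.2 y.2.

(* factor V b U a  :  (V,b) | (U,a), i.e. H | G with H = (V,b), G = (U,a). *)
Definition factor (V : finType) (b : V -> V -> R) (U : finType) (a : U -> U -> R)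
  : Prop :=
  exists phi : U -> V,
    [/\ forall v, exists u, phi u = v,
        forall v, deg b v = \sum_(u | phi u == v) deg a u &
        forall v v' u, phi u = v ->
          deg b v * \sum_(u' | phi u' == v') a u u' = deg a u * b v v'].

Definition weight_joining (U V : finType) (a : U -> U -> R) (b : V -> V -> R)
  (g : U * V -> U * V -> R) : Prop :=
  [/\ is_weight g,
      forall u, \sum_(v : V) deg g (u, v) = deg a u,
      forall v, \sum_(u : U) deg g (u, v) = deg b v,
      forall u v u', deg a u * \sum_(vt : V) g (u, v) (u', vt) = a u u' * deg g (u, v) &
      forall u v v', deg b v * \sum_(ut : U) g (u, v) (ut, v') = b v v' * deg g (u, v)].

Definition strongly_disjoint (U V : finType) (a : U -> U -> R) (b : V -> V -> R)
  : Prop :=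
  forall g, weight_joining a b g -> forall x y, g x y = tensor a b x y.

End Defs.

(* If g is a weight joining of alpha and beta, then G | (U * V, g) through fst
   and H | (U * V, g) through snd, so by hypothesis G (x) H | (U * V, g).  A
   factor map between graphs on the same finite vertex set is a bijection and a
   graph isomorphism, hence g and alpha (x) beta have the same entropy.  On the
   other hand the cross entropy sum rho ln (alpha (x) beta) equals
   sum alpha ln alpha + sum beta ln beta for every coupling rho of the edge
   marginals alpha and beta, in particular for g and for alpha (x) beta
   itself.  So the Kullback-Leibler divergence of g from alpha (x) beta
   vanishes, and the equality case of Gibbs' inequality gives
   g = alpha (x) beta. *)

From mathcomp Require Import all_boot all_order all_algebra.
From mathcomp Require Import reals exp.
Set Implicit Arguments. Unset Strict Implicit. Unset Printing Implicit Defensive.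
Import Order.TTheory GRing.Theory Num.Theory.
Local Open Scope ring_scope.

Section Gibbs.
Variable R : realType.
Implicit Types p q t : R.

Lemma ln_leif t : 0 < t -> ln t <= t - 1 ?= iff (t == 1).
Proof.
move=> t_gt0; apply/leifP; have [->|t_neq1] := eqVneq t 1; first by rewrite ln1 subrr.
rewrite ltrBrDl -[X in _ < X](lnK t_gt0); apply: expR_gt1Dx.
by rewrite ln_eq0.
Qed.

Lemma gibbs_leif p q : 0 <= p -> 0 <= q -> (0 < p -> 0 < q) ->
  p * ln q - p * ln p <= q - p ?= iff (p == q).
Proof.
move=> p_ge0 q_ge0 pq_gt0; apply/leifP.
have [->|p_neq_q] := eqVneq p q; first by rewrite !subrr.
move: p_ge0; rewrite le0r => /orP[/eqP p0|p_gt0].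
  by move: p_neq_q; rewrite p0 !mul0r subrr subr0 lt0r eq_sym => ->.
have q_gt0 := pq_gt0 p_gt0.
have -> : q - p = p * (q / p - 1) by rewrite mulrBr mulr1 mulrC divfK ?gt_eqF.
rewrite -mulrBr -ln_div ?posrE // ltr_pM2l // (lt_leif (ln_leif (divr_gt0 q_gt0 p_gt0))).
by apply: contra p_neq_q => /eqP qp1; rewrite -[q](divfK (lt0r_neq0 p_gt0)) qp1 mul1r.
Qed.

Lemma gibbs_eq (I : finType) (p q : I -> R) :
    (forall i, 0 <= p i) -> (forall i, 0 <= q i) -> (forall i, 0 < p i -> 0 < q i) ->
    \sum_i q i = \sum_i p i ->
    \sum_i p i * ln (q i) = \sum_i p i * ln (p i) ->
  p =1 q.
Proof.
move=> p_ge0 q_ge0 pq_gt0 sum_eq cross_eq.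
have := leif_sum (fun i (_ : true) => gibbs_leif (p_ge0 i) (q_ge0 i) (@pq_gt0 i)).
rewrite !sumrB sum_eq cross_eq !subrr => -[_]; rewrite eqxx => /esym/forall_inP all_eq i.
exact/eqP/all_eq.
Qed.

End Gibbs.

Section Pushforward.
Variables (R : realType) (I J : finType) (f : I -> J) (rho : I -> I -> R).

Definition pushforward (j j' : J) : R :=
  \sum_(x | f x == j) \sum_(y | f y == j') rho x y.

Lemma sum_pushforward (A : J -> J -> R) :
  \sum_x \sum_y rho x y * A (f x) (f y) =
  \sum_j \sum_j' pushforward j j' * A j j'.
Proof.
transitivity (\sum_j \sum_(x | f x == j) \sum_j' \sum_(y | f y == j') rho x y * A j j').
  rewrite (partition_big f xpredT) //; apply: eq_bigr => j _.
  apply: eq_bigr => x /eqP fx; rewrite (partition_big f xpredT) //.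
  by apply: eq_bigr => j' _; apply: eq_bigr => y /eqP fy; rewrite fx fy.
apply: eq_bigr => j _; rewrite exchange_big; apply: eq_bigr => j' _.
by rewrite mulr_suml; apply: eq_bigr => x _; rewrite mulr_suml.
Qed.

Lemma pushforward_inj : injective f -> forall x y, pushforward (f x) (f y) = rho x y.
Proof.
move=> f_inj x y; rewrite /pushforward (eq_bigl (pred1 x)) => [|x']; last exact: inj_eq.
by rewrite big_pred1_eq (eq_bigl (pred1 y)) ?big_pred1_eq // => y'; exact: inj_eq.
Qed.

Lemma le_pushforward : (forall x y, 0 <= rho x y) ->
  forall x y, rho x y <= pushforward (f x) (f y).
Proof.
move=> rho_ge0 x y; rewrite /pushforward (bigD1 x) //= (bigD1 y) //= -addrA lerDl.
by rewrite addr_ge0 ?sumr_ge0 // => x' _; rewrite sumr_ge0.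
Qed.

End Pushforward.

Lemma surjF_inj (T : finType) (f : T -> T) :
  (forall y, exists x, f x = y) -> injective f.
Proof.
move=> f_surj; have [g fgK] := fin_all_exists f_surj.
have [h ghK hgK] := injF_bij (can_inj fgK).
have fh : f =1 h by move=> x; rewrite -{1}(hgK x) fgK.
by apply: (can_inj (g := g)) => x; rewrite fh hgK.
Qed.

Section FactorMaps.
Variables (R : realType) (V U : finType) (b : V -> V -> R) (a : U -> U -> R).

Definition factor_map (phi : U -> V) : Prop :=
  [/\ forall v, exists u, phi u = v,
      forall v, deg b v = \sum_(u | phi u == v) deg a u &
      forall v v' u, phi u = v ->
        deg b v * \sum_(u' | phi u' == v') a u u' = deg a u * b v v'].

Lemma factor_map_pushforward phi :
    (forall v v', 0 <= b v v') -> (forall u u', 0 <= a u u') ->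
  factor_map phi -> pushforward phi a =2 b.
Proof.
move=> b_ge0 a_ge0 [_ deg_phi edge_phi] v v'.
have key : deg b v * pushforward phi a v v' = deg b v * b v v'.
  rewrite {2}deg_phi [RHS]mulr_suml /pushforward mulr_sumr.
  by apply: eq_bigr => u /eqP; exact: edge_phi.
have [bv0|bv_neq0] := eqVneq (deg b v) 0; last exact: mulfI key.
rewrite (psumr_eq0P (fun v'' _ => b_ge0 v v'') bv0) //.
have deg_ge0 u : 0 <= deg a u by apply: sumr_ge0 => u' _; exact: a_ge0.
rewrite deg_phi in bv0; apply: big1 => u phiu; apply: big1 => u' _.
exact: psumr_eq0P (fun u'' _ => a_ge0 u u'') (psumr_eq0P (fun u _ => deg_ge0 u) bv0 phiu) u' isT.
Qed.

End FactorMaps.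

Section PairFibers.
Variables (R : realType) (U V : finType) (F : U * V -> R).

Lemma sum_fiber_fst u : \sum_(x | x.1 == u) F x = \sum_v F (u, v).
Proof.
rewrite (reindex_onto (pair u) snd) => [|[u' v] /eqP /= -> //].
by apply: eq_bigl => v; rewrite !eqxx.
Qed.

Lemma sum_fiber_snd v : \sum_(x | x.2 == v) F x = \sum_u F (u, v).
Proof.
rewrite (reindex_onto (pair^~ v) fst) => [|[u v'] /eqP /= -> //].
by apply: eq_bigl => u; rewrite !eqxx.
Qed.

End PairFibers.

Section Weights.
Variables (R : realType) (T : finType) (c : T -> T -> R).
Hypothesis Wc : is_weight c.

Lemma weight_inhabited : inhabited T.
Proof.
have [_ _ sum1] := Wc; case: (pickP (@predT T)) => [t _|T0]; first exact: inhabits t.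
have sum0 : \sum_(t : T) \sum_t' c t t' = 0 by rewrite big_pred0.
by move: (oner_neq0 R); rewrite -sum1 sum0 eqxx.
Qed.

Lemma sum_deg_weight : \sum_t deg c t = 1.
Proof. by case: Wc. Qed.

End Weights.

Section Joinings.
Variables (R : realType) (U V : finType) (a : U -> U -> R) (b : V -> V -> R).
Hypotheses (Wa : is_weight a) (Wb : is_weight b).

Lemma joining_factor_map_fst g : weight_joining a b g -> factor_map a g fst.
Proof.
case=> Wg marg_a _ edge_a _; have [[_ v0]] := weight_inhabited Wg.
split=> [u|u|u u' [u1 v] /= <-]; first by exists (u, v0).
  by rewrite sum_fiber_fst marg_a.
by rewrite sum_fiber_fst edge_a mulrC.
Qed.

Lemma joining_factor_map_snd g : weight_joining a b g -> factor_map b g snd.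
Proof.
case=> Wg _ marg_b _ edge_b; have [[u0 _]] := weight_inhabited Wg.
split=> [v|v|v v' [u v1] /= <-]; first by exists (u0, v).
  by rewrite sum_fiber_snd marg_b.
by rewrite sum_fiber_snd edge_b mulrC.
Qed.

Lemma deg_tensor u v : deg (tensor a b) (u, v) = deg a u * deg b v.
Proof.
transitivity (\sum_u' \sum_v' a u u' * b v v'); first by rewrite pair_bigA.
by rewrite mulr_suml; apply: eq_bigr => u' _; rewrite mulr_sumr.
Qed.

Lemma tensor_joining : weight_joining a b (tensor a b).
Proof.
have [a_ge0 a_sym a1] := Wa; have [b_ge0 b_sym b1] := Wb.
split=> [|u|v|u v u'|u v v'].
- split=> [x y|x y|]; first exact: mulr_ge0.
    by rewrite /tensor a_sym b_sym.
  rewrite (eq_bigr (fun x => deg a x.1 * deg b x.2)) => [|[u v] _]; last exact: deg_tensor.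
  rewrite -(pair_bigA _ (fun u v => deg a u * deg b v)) /=.
  under eq_bigr do rewrite -mulr_sumr (sum_deg_weight Wb) mulr1.
  exact: sum_deg_weight Wa.
- by under eq_bigr do rewrite deg_tensor; rewrite -mulr_sumr (sum_deg_weight Wb) mulr1.
- by under eq_bigr do rewrite deg_tensor; rewrite -mulr_suml (sum_deg_weight Wa) mul1r.
- by rewrite deg_tensor /tensor /= -mulr_sumr mulrCA.
- by rewrite deg_tensor /tensor /= -mulr_suml mulrC -mulrA mulrCA.
Qed.

Definition coupling (rho : U * V -> U * V -> R) : Prop :=
  [/\ forall x y, 0 <= rho x y, pushforward fst rho =2 a & pushforward snd rho =2 b].

Lemma joining_coupling g : weight_joining a b g -> coupling g.
Proof.
move=> Jg; have [[g_ge0 _ _] _ _ _ _] := Jg.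
have [a_ge0 _ _] := Wa; have [b_ge0 _ _] := Wb.
split=> //; apply: factor_map_pushforward => //.
  exact: joining_factor_map_fst.
exact: joining_factor_map_snd.
Qed.

Lemma coupling_support rho : coupling rho ->
  forall x y, 0 < rho x y -> 0 < a x.1 y.1 /\ 0 < b x.2 y.2.
Proof.
case=> rho_ge0 rho_a rho_b x y rho_gt0; rewrite -rho_a -rho_b.
by split; apply: lt_le_trans rho_gt0 _; apply: le_pushforward.
Qed.

Lemma cross_entropy_coupling rho : coupling rho ->
  \sum_x \sum_y rho x y * ln (tensor a b x y) =
  \sum_u \sum_u' a u u' * ln (a u u') + \sum_v \sum_v' b v v' * ln (b v v').
Proof.
move=> C; have [rho_ge0 rho_a rho_b] := C.
transitivity (\sum_x \sum_y rho x y * ln (a x.1 y.1) +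
              \sum_x \sum_y rho x y * ln (b x.2 y.2)).
  rewrite -big_split; apply: eq_bigr => x _; rewrite -big_split; apply: eq_bigr => y _ /=.
  have := rho_ge0 x y; rewrite le0r => /orP[/eqP->|/(coupling_support C)[a_gt0 b_gt0]].
    by rewrite !mul0r addr0.
  by rewrite /tensor lnM ?posrE // mulrDr.
rewrite (sum_pushforward fst rho (fun u u' => ln (a u u'))).
rewrite (sum_pushforward snd rho (fun v v' => ln (b v v'))).
by congr (_ + _); apply: eq_bigr => ? _; apply: eq_bigr => ? _; rewrite ?rho_a ?rho_b.
Qed.

Lemma joining_eq_tensor g : weight_joining a b g ->
    \sum_x \sum_y g x y * ln (g x y) =
    \sum_x \sum_y tensor a b x y * ln (tensor a b x y) ->
  forall x y, g x y = tensor a b x y.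
Proof.
move=> Jg entropy_eq x y.
have Cg := joining_coupling Jg; have Cpi := joining_coupling tensor_joining.
have [[g_ge0 _ g1] _ _ _ _] := Jg; have [[pi_ge0 _ pi1] _ _ _ _] := tensor_joining.
apply: (@gibbs_eq _ _ (fun xy => g xy.1 xy.2) (fun xy => tensor a b xy.1 xy.2) _ _ _ _ _ (x, y)) => /=.
- by move=> [? ?]; apply: g_ge0.
- by move=> [? ?]; apply: pi_ge0.
- by move=> [x' y'] /(coupling_support Cg) [? ?]; apply: mulr_gt0.
- by rewrite -(pair_bigA _ g) -(pair_bigA _ (tensor a b)) g1 pi1.
rewrite -(pair_bigA _ (fun x y => g x y * ln (tensor a b x y))).
rewrite -(pair_bigA _ (fun x y => g x y * ln (g x y))) /=.
by rewrite entropy_eq (cross_entropy_coupling Cg) (cross_entropy_coupling Cpi).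
Qed.

End Joinings.

Theorem proposition4p6 (R : realType) (U V : finType)
  (alpha : U -> U -> R) (beta : V -> V -> R) :
  is_weight alpha -> is_weight beta ->
  (forall (W : finType) (kappa : W -> W -> R), is_weight kappa ->
     factor alpha kappa -> factor beta kappa -> factor (tensor alpha beta) kappa) ->
  strongly_disjoint alpha beta.
Proof.
move=> Wa Wb tensor_factor g Jg; have [Wg _ _ _ _] := Jg.
have [phi Fphi] : exists phi, factor_map (tensor alpha beta) g phi.
  apply: tensor_factor => //.
    by exists fst; apply: joining_factor_map_fst Jg.
  by exists snd; apply: joining_factor_map_snd Jg.
have phi_inj : injective phi by apply: surjF_inj; case: Fphi.
have [[g_ge0 _ _] _ _ _ _] := Jg; have [[pi_ge0 _ _] _ _ _ _] := tensor_joining Wa Wb.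
have g_iso x y : g x y = tensor alpha beta (phi x) (phi y).
  by rewrite -(pushforward_inj g phi_inj) (factor_map_pushforward pi_ge0 g_ge0 Fphi).
apply: joining_eq_tensor => //.
under eq_bigr => x _ do under eq_bigr => y _ do rewrite g_iso.
by rewrite [RHS](reindex_inj phi_inj); apply: eq_bigr => x _; rewrite [RHS](reindex_inj phi_inj).
Qed.
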